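(* Let $N\ge2$, $d\ge1$, and let $x(t)=(x_1(t),\dots,x_N(t))$ be a (Carathéodory) solution of $$\dot x_i(t)=\frac{\lambda_i(x)}{N}\sum_{j=1}^N M_{ij}(t)\,\phi_{ij}(x_i,x_j)\,(x_j(t)-x_i(t)),\qquad i=1,\dots,N,$$ where $x_i\in\mathbb{R}^d$, all $M_{ij}:[0,+\infty)\to[0,1]$ are Lebesgue measurable, and $\lambda_i:\mathbb{R}^{Nd}\to\mathbb{R}^+$, $\phi_{ij}:\mathbb{R}^d\times\mathbb{R}^d\to\mathbb{R}^+$ are Lipschitz continuous and strictly positive. Define $\mathrm{supp}(x(t))$ as the closed convex hull of $\{x_1(t),\dots,x_N(t)\}$. Then for $0\le t\le s$ it holds $\mathrm{supp}(x(t))\supseteq\mathrm{supp}(x(s))$. In particular, when $d=1$, the function $t\mapsto\max_j x_j(t)$ is non-increasing and $t\mapsto\min_j x_j(t)$ is non-decreasing; and in any dimension the diameter $t\mapsto\max_{i,j}|x_i(t)-x_j(t)|$ is non-increasing.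
   Context: $|\cdot|$ is the Euclidean norm. *)

From HB Require Import structures.
From mathcomp Require Import all_boot all_order all_algebra.
From mathcomp Require Import all_classical all_reals all_analysis.
Set Implicit Arguments. Unset Strict Implicit. Unset Printing Implicit Defensive.
Import Order.TTheory GRing.Theory Num.Theory.
Import numFieldNormedType.Exports.
Local Open Scope classical_set_scope.
Local Open Scope ring_scope.

Definition convex_rV (R : realType) (d : nat) (A : set 'rV[R]_d) : Prop :=
  forall a b, A a -> A b -> forall l : R, 0 <= l -> l <= 1 ->
    A (l *: a + (1 - l) *: b).

Definition closed_convex_hull (R : realType) (d : nat) (P : set 'rV[R]_d)
  : set 'rV[R]_d :=
  \bigcap_(C in [set C : set 'rV[R]_d | closed C /\ convex_rV C /\ P `<=` C]) C.

(* supp(x) for a configuration x (row i of the N x d matrix = agent x_i). *)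
Definition supp (R : realType) (N d : nat) (X : 'M[R]_(N, d)) : set 'rV[R]_d :=
  closed_convex_hull [set row i X | i in [set: 'I_N]].

Definition eucl_norm (R : realType) (d : nat) (v : 'rV[R]_d) : R :=
  Num.sqrt (\sum_(k < d) v ord0 k ^+ 2).

(* Maximum / minimum of finitely many reals (meaningful for N >= 1). *)
Definition fmax (R : realType) (N : nat) (v : 'I_N -> R) : R :=
  \big[Num.max/head 0 [seq v j | j <- enum 'I_N]]_(j < N) v j.
Definition fmin (R : realType) (N : nat) (v : 'I_N -> R) : R :=
  \big[Num.min/head 0 [seq v j | j <- enum 'I_N]]_(j < N) v j.

Definition diam (R : realType) (N d : nat) (X : 'M[R]_(N, d)) : R :=
  \big[Num.max/0]_(i < N) \big[Num.max/0]_(j < N) eucl_norm (row j X - row i X).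

Definition rhs (R : realType) (N d : nat)
  (lam : 'I_N -> 'M[R]_(N, d) -> R)
  (phi : 'I_N -> 'I_N -> 'rV[R]_d * 'rV[R]_d -> R)
  (M : 'I_N -> 'I_N -> R -> R) (X : 'M[R]_(N, d)) (t : R)
  (i : 'I_N) (k : 'I_d) : R :=
  lam i X / N%:R *
    \sum_(j < N) M i j t * phi i j (row i X, row j X) * (X j k - X i k).

(* R equipped with the Lebesgue (= completed Borel) sigma-algebra, on which
   completed_lebesgue_measure lives; this is convertible to R. *)
Definition Leb (R : realType) : measurableType _ :=
  caratheodory_type ((@wlength R idfun)^*)%mu.

Definition caratheodory_solution (R : realType) (N d : nat)
  (lam : 'I_N -> 'M[R]_(N, d) -> R)
  (phi : 'I_N -> 'I_N -> 'rV[R]_d * 'rV[R]_d -> R)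
  (M : 'I_N -> 'I_N -> R -> R) (x : R -> 'M[R]_(N, d)) : Prop :=
  forall (t : R), 0 <= t -> forall (i : 'I_N) (k : 'I_d),
    (@completed_lebesgue_measure R).-integrable
        (`[0%R, t]%classic : set (Leb R))
        (fun s : Leb R => (rhs lam phi M (x s) s i k)%:E) /\
    ((x t i k)%:E = (x 0 i k)%:E +
       \int[@completed_lebesgue_measure R]_(s in (`[0%R, t]%classic : set (Leb R)))
         (rhs lam phi M (x s) s i k)%:E)%E.

From HB Require Import structures.
From mathcomp Require Import all_boot all_order all_algebra.
From mathcomp Require Import all_classical all_reals all_analysis.
From mathcomp Require Import ring lra.
Import Order.TTheory GRing.Theory Num.Theory.
Import numFieldNormedType.Exports.
Local Open Scope classical_set_scope.
Local Open Scope ring_scope.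
Set Implicit Arguments. Unset Strict Implicit. Unset Printing Implicit Defensive.

(* Fix a direction w and put f_i(t) = <w, x_i(t)>. The f_i solve the integral
   equation f_i' = sum_j a_ij (f_j - f_i) with nonnegative weights a_ij that
   are bounded on bounded time intervals, so they obey a maximum principle:
   max_j f_j is non-increasing. It is proved window by window: on a window of
   length delta with N A delta <= 1/2 (A bounding the weights), the excess of
   f_i over the initial maximum, estimated from the last time f_i was below
   it, is at most half of any bound on that excess, hence zero.
   Consequently, each agent at time s lies in every closed half-space that
   contains all agents at an earlier time t. Separating a point from a closed
   convex set turns this into the inclusion of supports; the choices of w as
   plus or minus a coordinate vector and as the difference of two agents give
   the statements on max/min and on the diameter. *)

Section Primitive.
Variable R : realType.
Local Notation mu := (@completed_lebesgue_measure R).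
Local Open Scope ereal_scope.

Lemma measurable_itv_Leb (i : interval R) : measurable ([set` i] : set (Leb R)).
Proof. by apply: sub_caratheodory; exact: measurable_itv. Qed.

Definition is_primitive (F h : R -> R) : Prop := forall t : R, (0 <= t)%R ->
  mu.-integrable (`[0%R, t]%classic : set (Leb R)) (fun s : Leb R => (h s)%:E) /\
  (F t)%:E = (F 0%R)%:E + \int[mu]_(s in (`[0%R, t]%classic : set (Leb R))) (h s)%:E.

Lemma eq_is_primitive F h F' h' : F =1 F' -> h =1 h' ->
  is_primitive F h -> is_primitive F' h'.
Proof. by move=> /funext <- /funext <-. Qed.

Lemma is_primitive0 : is_primitive (fun=> 0%R) (fun=> 0%R).
Proof. by move=> t _; rewrite integral0 adde0; split => //; exact: integrable0. Qed.

Lemma is_primitiveD F1 h1 F2 h2 : is_primitive F1 h1 -> is_primitive F2 h2 ->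
  is_primitive (fun t => F1 t + F2 t)%R (fun s => h1 s + h2 s)%R.
Proof.
move=> P1 P2 t t0; have [i1 e1] := P1 t t0; have [i2 e2] := P2 t t0.
have mI := measurable_itv_Leb `[0%R, t].
split; first by apply: eq_integrable (integrableD mI i1 i2) => // s _; rewrite /= EFinD.
rewrite !EFinD e1 e2 addeACA -(integralD_EFin mI i1 i2).
by congr (_ + _); apply: eq_integral => s _; rewrite EFinD.
Qed.

Lemma is_primitiveZ F h (a : R) : is_primitive F h ->
  is_primitive (fun t => a * F t)%R (fun s => a * h s)%R.
Proof.
move=> P t t0; have [i e] := P t t0; have mI := measurable_itv_Leb `[0%R, t].
split; first by apply: eq_integrable (integrableZl mI a i) => // s _; rewrite /= EFinM.
under eq_integral do rewrite EFinM.
by rewrite integralZl // !EFinM e muleDr.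
Qed.

Lemma is_primitive_sum (I : eqType) (r : seq I) (F h : I -> R -> R) :
  (forall k, is_primitive (F k) (h k)) ->
  is_primitive (fun t => \sum_(k <- r) F k t)%R (fun s => \sum_(k <- r) h k s)%R.
Proof.
move=> P; elim: r => [|k r IH].
  by apply: eq_is_primitive is_primitive0 => t; rewrite big_nil.
by apply: eq_is_primitive (is_primitiveD (P k) IH) => t; rewrite big_cons.
Qed.

Lemma is_primitive_sub F h r s : is_primitive F h -> (0 <= r)%R -> (r <= s)%R ->
  mu.-integrable (`]r, s]%classic : set (Leb R)) (fun u : Leb R => (h u)%:E) /\
  ((F s - F r)%R)%:E = \int[mu]_(u in (`]r, s]%classic : set (Leb R))) (h u)%:E.
Proof.
move=> P r0 rs; have [iS eS] := P s (le_trans r0 rs); have [_ eR] := P r r0.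
have split_0s : (`[0%R, s]%classic : set (Leb R)) = `[0%R, r] `|` `]r, s].
  apply/seteqP; split => u /=; rewrite !in_itv /=.
    by move=> /andP[u0 us]; case: (leP u r) => ur; [left|right]; apply/andP; split; lra.
  by case=> /andP[? ?]; apply/andP; split; lra.
have iRS : mu.-integrable (`]r, s]%classic : set (Leb R)) (fun u : Leb R => (h u)%:E).
  apply: integrableS iS; try exact: measurable_itv_Leb.
  by rewrite split_0s; exact: subsetUr.
split => //.
have : (F s)%:E = (F r)%:E + \int[mu]_(u in (`]r, s]%classic : set (Leb R))) (h u)%:E.
  rewrite eS split_0s integral_setU; first by rewrite addeA -eR.
  - exact: measurable_itv_Leb.
  - exact: measurable_itv_Leb.
  - by rewrite -split_0s; exact: measurable_int iS.
  - apply/disj_setPS => u /= []; rewrite !in_itv /= => /andP[_ ur] /andP[ru _].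
    by move: (lt_le_trans ru ur); rewrite ltxx.
by move=> E; rewrite EFinB E addeAC subee // add0e.
Qed.

Lemma is_primitive_sub_le F h r s c : is_primitive F h -> (0 <= r)%R -> (r <= s)%R ->
  (forall u, (r < u)%R -> (u <= s)%R -> (h u <= c)%R) -> (F s - F r <= c * (s - r))%R.
Proof.
move=> P r0 rs hc; have [i e] := is_primitive_sub P r0 rs.
have mI := measurable_itv_Leb `]r, s].
have mu_rs : mu (`]r, s]%classic : set (Leb R)) = (s - r)%:E.
  by rewrite [LHS]lebesgue_measure_itv /= lte_fin; case: ltgtP rs => // ->; rewrite subrr.
have ic : mu.-integrable (`]r, s]%classic : set (Leb R)) (fun=> c%:E).
  apply/integrableP; split; first exact: measurable_cst.
  rewrite integral_cst //; change (`|c|%:E * mu (`]r, s]%classic : set (Leb R)) < +oo).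
  by rewrite mu_rs -EFinM ltry.
rewrite -lee_fin e EFinM -mu_rs -integral_cst //.
apply: le_integral => // u; rewrite inE /= in_itv /= => /andP[ru us].
by rewrite lee_fin hc.
Qed.

Lemma is_primitive_bounded F h T : is_primitive F h -> (0 <= T)%R ->
  exists B : R, forall s, (0 <= s <= T)%R -> (`|F s| <= B)%R.
Proof.
move=> P T0; have [iT _] := P T T0.
set J := \int[mu]_(u in (`[0%R, T]%classic : set (Leb R))) `|(h u)%:E|.
have finJ : J \is a fin_num := integrable_fin_num (measurable_itv_Leb _) (integrable_abse iT).
exists (`|F 0| + fine J)%R => s /andP[s0 sT]; have [iS eS] := P s s0.
rewrite -lee_fin EFinD fineK // -[X in X <= _]/`|(F s)%:E| eS.
apply: le_trans (lee_abs_add _ _) _; rewrite leeD2l //.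
apply: le_trans (le_abse_integral mu (measurable_itv_Leb _) (measurable_int _ iS)) _.
apply: ge0_subset_integral => //; try exact: measurable_itv_Leb.
- exact: measurable_int (integrable_abse iT).
- by move=> u /=; rewrite !in_itv /= => /andP[-> us]; rewrite (le_trans us sT).
Qed.
End Primitive.

Section RealBounds.
Variable R : realType.

Lemma fin_family_ub (I : finType) (T : Type) (D : set T) (F : I -> T -> R) :
  (forall i, exists B, forall s, D s -> F i s <= B) ->
  exists B, 0 <= B /\ forall i s, D s -> F i s <= B.
Proof.
move=> /fin_all_exists [B FB]; exists (\big[Num.max/0]_i B i).
split=> [|i s Ds]; first exact: bigmax_ge_id.
exact: le_trans (FB i s Ds) (le_bigmax _ _ i).
Qed.

Lemma lipschitz_affine_bound (V : normedModType R) (f : V -> R) : lipschitz f ->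
  exists c k : R, 0 <= k /\ forall X, `|f X| <= c + k * `|X|.
Proof.
move=> /pinfty_ex_gt0 [k k0 fk]; exists `|f 0|, k; split => [|X]; first exact: ltW.
have fX : `|f X - f 0| <= k * `|X| by rewrite -[X in k * `|X|]subr0; exact: (fk (X, 0)).
apply: le_trans (_ : `|f 0| + `|f X - f 0| <= _); last by rewrite lerD2l.
by rewrite -[X in `|X| <= _](subrK (f 0) (f X)) addrC ler_normD.
Qed.

Lemma mx_norm_le (m n : nat) (X : 'M[R]_(m, n)) (B : R) : 0 <= B ->
  (forall i j, `|X i j| <= B) -> `|X| <= B.
Proof.
by move=> B0 XB; rewrite [`|X|]mx_normrE; apply: bigmax_le => // -[i j] _; exact: XB.
Qed.

Lemma le0_of_halving (T : Type) (D : set T) (E : T -> R) (B : R) : 0 <= B ->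
  (forall u, D u -> E u <= B) ->
  (forall b, 0 <= b -> (forall u, D u -> E u <= b) -> forall u, D u -> E u <= b / 2) ->
  forall u, D u -> E u <= 0.
Proof.
move=> B0 EB halve u Du; rewrite leNgt; apply/negP => Eu0.
have EBn n v : D v -> E v <= B / 2 ^+ n.
  elim: n v => [|n IH] v Dv; first by rewrite expr0 divr1 EB.
  rewrite exprSr invfM mulrA; apply: halve v Dv => //.
  by rewrite divr_ge0 // exprn_ge0.
pose n := Num.truncn (B / E u).
have n_gt : B / E u < n.+1%:R := truncnS_gt _.
have pow_ge : n.+1%:R <= 2 ^+ n.+1 :> R.
  by rewrite -natrX ler_nat ltnW // ltn_expl.
have := EBn n.+1 u Du; rewrite ler_pdivlMr ?exprn_gt0 //.
rewrite ltr_pdivrMr // in n_gt.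
have : E u * n.+1%:R <= E u * 2 ^+ n.+1 by rewrite ler_pM2l.
lra.
Qed.

Lemma last_time_le (F : R -> R) (C r u m : R) : r <= u -> F r <= m ->
  (forall a b, r <= a -> a <= b -> b <= u -> F b - F a <= C * (b - a)) ->
  exists2 sigma, r <= sigma <= u &
    F sigma <= m /\ forall rho, sigma < rho -> rho <= u -> m < F rho.
Proof.
move=> ru Frm FC.
pose S := [set rho | r <= rho <= u /\ F rho <= m].
have Sr : S r by split; rewrite ?lexx ?ru.
have supS : has_sup S by split; [exists r | exists u => rho [/andP[]]].
have r_le := sup_upper_bound supS Sr.
have le_u : sup S <= u by apply: ge_sup; [exists r | move=> rho [/andP[]]].
exists (sup S); first by rewrite r_le le_u.
split=> [|rho Srho rhou]; last first.
  rewrite ltNge; apply/negP => Fle.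
  have S_rho : S rho by split; rewrite ?(ltW (le_lt_trans r_le Srho)) ?rhou.
  by have := sup_upper_bound supS S_rho; rewrite leNgt Srho.
apply/ler_addgt0Pr => e e0.
have C1 : 0 < `|C| + 1 by rewrite ltr_wpDl.
have [rho [/andP[r_rho rho_u] Frho] rho_gt] := sup_adherent (divr_gt0 e0 C1) supS.
have rho_le := sup_upper_bound supS (conj (introT andP (conj r_rho rho_u)) Frho).
have := FC _ _ r_rho rho_le le_u.
have : C * (sup S - rho) <= (`|C| + 1) * (e / (`|C| + 1)).
  apply: le_trans (_ : (`|C| + 1) * (sup S - rho) <= _).
    by rewrite ler_wpM2r ?subr_ge0 // (le_trans (ler_norm C)) // lerDl.
  by rewrite ler_wpM2l ?ltW //; lra.
have : (`|C| + 1) * (e / (`|C| + 1)) = e by rewrite mulrC divfK ?gt_eqF.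
lra.
Qed.
Lemma fmax_le (n : nat) (f : 'I_n -> R) B : (0 < n)%N -> (forall j, f j <= B) ->
  fmax f <= B.
Proof.
move=> n0 fB; apply: bigmax_le => [|j _]; last exact: fB.
by rewrite -nth0 (nth_map (Ordinal n0)) ?size_enum_ord.
Qed.

Lemma le_fmin (n : nat) (f : 'I_n -> R) B : (0 < n)%N -> (forall j, B <= f j) ->
  B <= fmin f.
Proof.
move=> n0 fB; apply: le_bigmin => [|j _]; last exact: fB.
by rewrite -nth0 (nth_map (Ordinal n0)) ?size_enum_ord.
Qed.

End RealBounds.

Section MaximumPrinciple.
Variables (R : realType) (I : finType) (f g : I -> R -> R) (a : I -> I -> R -> R).
Hypothesis f_prim : forall i, is_primitive (f i) (g i).
Hypothesis g_le : forall i s, 0 <= s -> g i s <= \sum_j a i j s * (f j s - f i s).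
Hypothesis a_ge0 : forall i j s, 0 <= s -> 0 <= a i j s.
Hypothesis a_ub : forall T, 0 <= T -> exists2 A, 0 <= A &
  forall i j s, 0 <= s <= T -> a i j s <= A.

Section Horizon.
Variables (T A B : R).
Hypotheses (A0 : 0 <= A) (B0 : 0 <= B).
Hypothesis a_le : forall i j s, 0 <= s <= T -> a i j s <= A.
Hypothesis f_bd : forall i s, 0 <= s <= T -> `|f i s| <= B.
Let K := #|I|%:R * A.

Let K_ge0 : 0 <= K. Proof. by rewrite mulr_ge0. Qed.

Lemma g_le_spread i s b : 0 <= s <= T -> 0 <= b ->
  (forall j, f j s - f i s <= b) -> g i s <= K * b.
Proof.
move=> /[dup] /andP[s0 _] sT b0 fb; apply: le_trans (g_le i s0) _.
apply: le_trans (_ : \sum_(j : I) A * b <= _); last first.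
  by rewrite sumr_const /K mulr_natl mulrnAl.
apply: ler_sum => j _; apply: le_trans (_ : a i j s * b <= _).
  by rewrite ler_wpM2l ?a_ge0.
by rewrite ler_wpM2r ?a_le.
Qed.

Lemma f_increment_le i r u : 0 <= r -> r <= u -> u <= T ->
  f i u - f i r <= K * (B + B) * (u - r).
Proof.
move=> r0 ru uT; apply: (is_primitive_sub_le (f_prim i) r0 ru) => rho r_rho rho_u.
have rhoT : 0 <= rho <= T by apply/andP; split; lra.
apply: (g_le_spread rhoT (addr_ge0 B0 B0)) => j.
have := f_bd j rhoT; have := f_bd i rhoT; rewrite !ler_norml; lra.
Qed.

Lemma window_le r m : 0 <= r -> (forall j, f j r <= m) ->
  forall u, r <= u -> K * (u - r) <= 1 / 2 -> u <= T -> forall i, f i u <= m.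
Proof.
move=> r0 fr u ru Ku uT i.
pose D := [set p : R * I | r <= p.1 /\ K * (p.1 - r) <= 1 / 2 /\ p.1 <= T].
pose E (p : R * I) := f p.2 p.1 - m.
suff : E (u, i) <= 0 by rewrite subr_le0.
have fm_le v j : D (v, j) -> E (v, j) <= B + `|m|.
  move=> [/= rv [_ /= vT]]; have v0T : 0 <= v <= T by apply/andP; split; lra.
  have := f_bd j v0T; rewrite ler_norml /E /= => /andP[_ fB].
  have := ler_norm (- m); rewrite normrN; lra.
apply: (le0_of_halving (D := D) (E := E) (addr_ge0 B0 (normr_ge0 m)));
  [by case=> v j; exact: fm_le | | by split].
(* After the last time sigma at which agent j is below m, every pull f k - f j
   is at most the current bound b on the excess, so on the window the excess
   grows by at most K b (v - r) <= b / 2. *)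
move=> b b0 Eb [v j] [/= rv [/= Kv /= vT]]; rewrite /E /=.
case: (leP (f j v) m) => [fjv | m_lt].
  have : 0 <= b / 2 by rewrite divr_ge0.
  lra.
have [sigma /andP[r_sigma sigma_v] [f_sigma above]] :=
  last_time_le rv (fr j) (fun a c ra ac cv =>
    f_increment_le j (le_trans r0 ra) ac (le_trans cv vT)).
have rise : f j v - f j sigma <= K * b * (v - sigma).
  apply: (is_primitive_sub_le (f_prim j) (le_trans r0 r_sigma) sigma_v).
  move=> rho sigma_rho rho_v.
  have D_rho k : D (rho, k) by split => /=; [lra | split; [nra | lra]].
  apply: g_le_spread => [||k]; first by apply/andP; split; lra.
    exact: b0.
  have := Eb (rho, k) (D_rho k); have := above rho sigma_rho rho_v; rewrite /E /=; lra.
have : K * b * (v - sigma) <= K * b * (v - r) by rewrite ler_wpM2l ?mulr_ge0 //; lra.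
have : b * (K * (v - r)) <= b * (1 / 2) by rewrite ler_wpM2l.
lra.
Qed.

Lemma le_before_horizon t0 m : 0 <= t0 -> (forall j, f j t0 <= m) ->
  forall u, t0 <= u -> u <= T -> forall i, f i u <= m.
Proof.
move=> t00 ft0; have K0 := K_ge0; pose del := (2 * (K + 1))^-1.
have del0 : 0 < del by rewrite invr_gt0; lra.
have Kdel : K * del <= 1 / 2.
  have K1 : K + 1 != 0 by rewrite gt_eqF //; lra.
  have : (K + 1) * del = 1 / 2 by rewrite /del invfM mulrCA divff // mulr1 div1r.
  have : 0 <= del by exact: ltW.
  nra.
have steps k u : t0 <= u -> u <= t0 + k%:R * del -> u <= T -> forall i, f i u <= m.
  elim: k u => [|k IH] u t0u uk uT.
    rewrite mul0r addr0 in uk.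
    by have -> : u = t0 by apply/eqP; rewrite eq_le uk t0u.
  have kdel0 : 0 <= k%:R * del by rewrite mulr_ge0 ?ler0n ?ltW.
  case: (leP u (t0 + k%:R * del)) => [uk'|r_u]; first exact: IH.
  rewrite -addn1 natrD mulrDl mul1r in uk.
  have r0 : 0 <= t0 + k%:R * del by exact: addr_ge0.
  have fr j : f j (t0 + k%:R * del) <= m by apply: IH; lra.
  have Ku : K * (u - (t0 + k%:R * del)) <= 1 / 2.
    have : K * (u - (t0 + k%:R * del)) <= K * del by rewrite ler_wpM2l //; lra.
    lra.
  exact: window_le r0 fr u (ltW r_u) Ku uT.
move=> u t0u uT; apply: (steps (Num.truncn ((u - t0) / del)).+1) => //.
have := truncnS_gt ((u - t0) / del); rewrite ltr_pdivrMr //; lra.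
Qed.

End Horizon.

Theorem maximum_principle t0 m : 0 <= t0 -> (forall j, f j t0 <= m) ->
  forall s, t0 <= s -> forall i, f i s <= m.
Proof.
move=> t00 ft0 s t0s; have s0 := le_trans t00 t0s.
have [A A0 a_le] := a_ub s0.
have [B [B0 f_bd]] := fin_family_ub (F := fun i u => `|f i u|)
  (fun i => is_primitive_bounded (f_prim i) s0).
exact: (le_before_horizon A0 B0 a_le f_bd t00 ft0 t0s).
Qed.

End MaximumPrinciple.

Section Separation.
Variables (R : realType) (d : nat).
Implicit Types (C : set 'rV[R]_d) (u v w y z p : 'rV[R]_d).

Definition dotv u v : R := \sum_(k < d) u 0 k * v 0 k.

Lemma dotvBr u v w : dotv u (v - w) = dotv u v - dotv u w.
Proof. by rewrite /dotv -sumrB; apply: eq_bigr => k _; rewrite !mxE mulrBr. Qed.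

Lemma dotv_self_ge0 u : 0 <= dotv u u.
Proof. by apply: sumr_ge0 => k _; rewrite -expr2 sqr_ge0. Qed.

Lemma dotvNl u v : dotv (- u) v = - dotv u v.
Proof. by rewrite /dotv -sumrN; apply: eq_bigr => k _; rewrite mxE mulNr. Qed.

Lemma dotv_delta k u : dotv (delta_mx 0 k) u = u 0 k.
Proof.
rewrite /dotv (bigD1 k) //= big1 => [|l /negbTE lk]; first by rewrite mxE !eqxx mul1r addr0.
by rewrite mxE lk andbF mul0r.
Qed.

Lemma dotv_self_le u v : dotv u u <= dotv u v -> dotv u u <= dotv v v.
Proof.
have : 2 * dotv u v <= dotv u u + dotv v v.
  rewrite /dotv mulr_sumr -big_split /=; apply: ler_sum => k _.
  have := sqr_ge0 (u 0 k - v 0 k); nra.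
lra.
Qed.

Lemma eucl_normE u : eucl_norm u = Num.sqrt (dotv u u).
Proof. by congr Num.sqrt; apply: eq_bigr => k _; rewrite expr2. Qed.

Lemma dotv_convex_comb y z p t :
  dotv (y - (t *: p + (1 - t) *: z)) (y - (t *: p + (1 - t) *: z)) =
  dotv (y - z) (y - z) - 2 * t * dotv (y - z) (p - z) + t ^+ 2 * dotv (p - z) (p - z).
Proof.
rewrite /dotv !mulr_sumr -sumrB -big_split /=.
by apply: eq_bigr => k _; rewrite !mxE; ring.
Qed.

Lemma dotv_sub_le p y z :
  dotv (p - z) (p - z) <= 2 * dotv (p - y) (p - y) + 2 * dotv (y - z) (y - z).
Proof.
rewrite /dotv !mulr_sumr -big_split /=; apply: ler_sum => k _; rewrite !mxE.
have := sqr_ge0 ((p 0 k - y 0 k) - (y 0 k - z 0 k)); nra.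
Qed.

Lemma closed_sqdist_gap C y : closed C -> ~ C y ->
  exists2 e : R, 0 < e & forall z, C z -> e <= dotv (y - z) (y - z).
Proof.
move=> cC nCy; have /nbhs_ballP [e e0 ballC] : nbhs y (~` C) by exact: (closed_openC cC).
exists (e ^+ 2); first by rewrite exprn_gt0.
move=> z Cz; have e_le : e <= `|y - z|.
  rewrite leNgt; apply/negP => lt; apply: (ballC z) => //.
  by rewrite mx_norm_ball /ball_.
have [[i k] /= yz_k] := mx_norm_neq0 (negbT (gt_eqF (lt_le_trans e0 e_le))).
rewrite /dotv (bigD1 k) //= -[X in X <= _]addr0 lerD //; last first.
  by apply: sumr_ge0 => l _; rewrite -expr2 sqr_ge0.
have ea : e <= `|(y - z) 0 k| by rewrite -(ord1 i) -yz_k.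
rewrite -expr2 -[(y - z) 0 k ^+ 2]real_normK ?num_real // !expr2.
exact: (ler_pM (ltW e0) (ltW e0) ea ea).
Qed.

Lemma near_min_dotv_le C y z p (eta t : R) : convex_rV C -> C z -> C p ->
  (forall w, C w -> dotv (y - z) (y - z) <= dotv (y - w) (y - w) + eta) ->
  0 <= t <= 1 -> 2 * t * dotv (y - z) (p - z) <= eta + t ^+ 2 * dotv (p - z) (p - z).
Proof.
move=> vC Cz Cp zmin /andP[t0 t1].
have := zmin _ (vC _ _ Cp Cz t t0 t1); rewrite dotv_convex_comb; lra.
Qed.

Lemma separate_points (I : finType) (P : I -> 'rV[R]_d) C y :
  closed C -> convex_rV C -> C !=set0 -> (forall j, C (P j)) -> ~ C y ->
  exists w, forall j, dotv w (P j) < dotv w y.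
Proof.
move=> cC vC [c Cc] CP nCy; have [D D0 gap] := closed_sqdist_gap cC nCy.
(* z is an eta-minimiser of the squared distance to y over C; t and eta are
   chosen so that the first-order inequality near_min_dotv_le yields
   dotv (y - z) (P j - z) <= D / 2 < dotv (y - z) (y - z). *)
pose Q := dotv (y - c) (y - c) + \sum_j dotv (P j - y) (P j - y).
have Qc : dotv (y - c) (y - c) <= Q.
  by rewrite lerDl sumr_ge0 // => j _; exact: dotv_self_ge0.
have QP j : dotv (P j - y) (P j - y) <= Q.
  rewrite /Q (bigD1 j) //= addrCA lerDl addr_ge0 ?dotv_self_ge0 //.
  by rewrite sumr_ge0 // => i _; exact: dotv_self_ge0.
have Q0 : 0 <= Q := le_trans (dotv_self_ge0 _) Qc.
pose Q' := 4 * Q + 2 * D; have Q'0 : 0 <= Q' by rewrite /Q'; lra.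
pose t := D / (2 * (Q' + D)).
have t0 : 0 < t by rewrite divr_gt0 // mulr_gt0 //; lra.
have tQD : t * (2 * (Q' + D)) = D by rewrite divfK // gt_eqF // mulr_gt0 //; lra.
pose eta := t * D / 2.
have eta0 : 0 < eta by rewrite divr_gt0 // mulr_gt0.
pose E := [set dotv (y - w) (y - w) | w in C].
have infE : has_inf E.
  split; first by exists (dotv (y - c) (y - c)), c.
  by exists 0 => _ [w _ <-]; exact: dotv_self_ge0.
have [_ [z Cz <-] z_lt] := inf_adherent eta0 infE.
have zmin w : C w -> dotv (y - z) (y - z) <= dotv (y - w) (y - w) + eta.
  move=> Cw; have : inf E <= dotv (y - w) (y - w).
    by apply: ge_inf (ex_intro2 _ _ w Cw erefl) => //; case: infE.
  lra.
have t01 : 0 <= t <= 1 by apply/andP; split; nra.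
have tQ' : t * Q' <= D / 2 by nra.
exists (y - z) => j; rewrite -subr_gt0 -dotvBr.
have -> : y - P j = (y - z) - (P j - z) by rewrite opprB addrA subrK.
rewrite dotvBr subr_gt0; have := gap z Cz.
have := near_min_dotv_le vC Cz (CP j) zmin t01.
have : dotv (P j - z) (P j - z) <= Q'.
  have := dotv_sub_le (P j) y z; have := QP j; have := zmin c Cc.
  rewrite /Q' /eta; nra.
move=> S_le near D_le.
have : t ^+ 2 * dotv (P j - z) (P j - z) <= t * (D / 2).
  rewrite expr2 -mulrA ler_pM2l //.
  by apply: (le_trans _ tQ'); rewrite ler_pM2l.
rewrite /eta in near => tS.
have : t * (2 * dotv (y - z) (P j - z)) <= t * D by lra.
rewrite ler_pM2l //; lra.
Qed.

Lemma closed_convex_hull_sub (I : finType) (P : I -> 'rV[R]_d) (Q : set 'rV[R]_d) :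
  (forall q w, Q q -> exists j, dotv w q <= dotv w (P j)) ->
  closed_convex_hull Q `<=` closed_convex_hull [set P j | j in [set: I]].
Proof.
move=> Qdom q hullQ; apply: hullQ; split; [|split].
- by apply: closed_bigI => C [].
- move=> a b Ha Hb l l0 l1 C HC.
  by case: (HC) => _ [vC _]; apply: vC => //; [exact: Ha | exact: Hb].
move=> q' Qq' C [cC [vC PC]]; apply: contrapT => nCq'.
have CP j : C (P j) by apply: PC; exists j.
have [j0 _] := Qdom q' 0 Qq'.
have [w sep] := separate_points cC vC (ex_intro _ _ (CP j0)) CP nCq'.
have [j] := Qdom q' w Qq'; by rewrite leNgt sep.
Qed.
End Separation.

Section Configurations.
Variables (R : realType) (N d : nat).
Implicit Types (X Y : 'M[R]_(N, d)).

Definition lin_dominated X Y :=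
  forall w i, exists j, dotv w (row i X) <= dotv w (row j Y).

Lemma supp_sub_dominated X Y : lin_dominated X Y -> supp X `<=` supp Y.
Proof. by move=> XY; apply: closed_convex_hull_sub => _ w [i _ <-]; exact: XY. Qed.

Lemma fmax_fmin_dominated X Y k : (0 < N)%N -> lin_dominated X Y ->
  fmax (fun j => X j k) <= fmax (fun j => Y j k) /\
  fmin (fun j => Y j k) <= fmin (fun j => X j k).
Proof.
move=> N0 XY; split.
- apply: fmax_le => // i; have [j] := XY (delta_mx 0 k) i.
  by rewrite !dotv_delta !mxE => /le_trans; apply; exact: (le_bigmax _ (fun j => Y j k)).
- apply: le_fmin => // i; have [j] := XY (- delta_mx 0 k) i.
  rewrite !dotvNl !dotv_delta !mxE lerN2; apply: le_trans.
  exact: (bigmin_le _ j (fun j => Y j k)).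
Qed.

Lemma diam_le_dominated X Y : lin_dominated X Y -> diam X <= diam Y.
Proof.
move=> XY; apply: bigmax_le => [|i _]; first exact: bigmax_ge_id.
apply: bigmax_le => [|j _]; first exact: bigmax_ge_id.
pose w := row j X - row i X.
have [a Ha] := XY w j; have [b Hb] := XY (- w) i.
rewrite !dotvNl lerN2 in Hb.
apply: le_trans (_ : eucl_norm (row a Y - row b Y) <= _); last first.
  apply: le_trans (le_bigmax _ _ b).
  exact: (le_bigmax _ (fun a => eucl_norm (row a Y - row b Y))).
rewrite !eucl_normE ler_sqrt ?dotv_self_ge0 //; apply: dotv_self_le.
by rewrite [X in X <= _]dotvBr dotvBr; lra.
Qed.
End Configurations.

Section Agents.
Variables (R : realType) (N d : nat).
Variables (lam : 'I_N -> 'M[R]_(N, d) -> R)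
  (phi : 'I_N -> 'I_N -> 'rV[R]_d * 'rV[R]_d -> R)
  (M : 'I_N -> 'I_N -> R -> R) (x : R -> 'M[R]_(N, d)).
Hypothesis M_range : forall i j t, 0 <= t -> 0 <= M i j t <= 1.
Hypothesis lam_lip : forall i, lipschitz (lam i).
Hypothesis lam_pos : forall i X, 0 < lam i X.
Hypothesis phi_lip : forall i j, lipschitz (phi i j).
Hypothesis phi_pos : forall i j y z, 0 < phi i j (y, z).
Hypothesis x_sol : caratheodory_solution lam phi M x.

Definition weight (i j : 'I_N) (s : R) : R :=
  lam i (x s) / N%:R * M i j s * phi i j (row i (x s), row j (x s)).

Lemma weight_ge0 i j s : 0 <= s -> 0 <= weight i j s.
Proof.
move=> s0; have /andP[M0 _] := M_range i j s0.
apply: mulr_ge0; last exact: ltW.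
by apply: mulr_ge0 => //; exact: divr_ge0 (ltW (lam_pos _ _)) (ler0n _ _).
Qed.

Lemma coord_primitive i k :
  is_primitive (fun t => x t i k) (fun s => \sum_j weight i j s * (x s j k - x s i k)).
Proof.
apply: eq_is_primitive (fun t t0 => x_sol t0 i k) => // s.
by rewrite /rhs mulr_sumr; apply: eq_bigr => j _; rewrite /weight !mulrA.
Qed.

Lemma x_bounded T : 0 <= T ->
  exists2 B, 0 <= B & forall i k s, 0 <= s <= T -> `|x s i k| <= B.
Proof.
move=> T0; have [B [B0 xB]] := fin_family_ub (I := ('I_N * 'I_d)%type)
  (F := fun p s => `|x s p.1 p.2|)
  (fun p => is_primitive_bounded (coord_primitive p.1 p.2) T0).
by exists B => // i k s sT; exact: (xB (i, k)).
Qed.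

Lemma weight_bounded T : 0 <= T ->
  exists2 A, 0 <= A & forall i j s, 0 <= s <= T -> weight i j s <= A.
Proof.
move=> T0; have [B B0 xB] := x_bounded T0.
have row_le s l : 0 <= s <= T -> `|row l (x s)| <= B.
  by move=> sT; apply: mx_norm_le => // a b; rewrite mxE; exact: xB.
have pair_ub (p : 'I_N * 'I_N) :
    exists A, forall s, 0 <= s <= T -> weight p.1 p.2 s <= A.
  case: p => i j /=.
  have [c [k [k0 lamB]]] := lipschitz_affine_bound (lam_lip i).
  have [c' [k' [k'0 phiB]]] := lipschitz_affine_bound (phi_lip i j).
  exists ((c + k * B) / N%:R * (c' + k' * B)) => s /[dup] sT /andP[s0 _].
  have /andP[M0 M1] := M_range i j s0.
  have phi0 := ltW (phi_pos i j (row i (x s)) (row j (x s))).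
  rewrite /weight -mulrA; apply: ler_pM.
  - exact: divr_ge0 (ltW (lam_pos _ _)) (ler0n _ _).
  - exact: mulr_ge0.
  - rewrite ler_wpM2r ?invr_ge0 //; apply: le_trans (ler_norm _) _.
    apply: le_trans (lamB _) _; rewrite lerD2l ler_wpM2l //.
    by apply: mx_norm_le => // a b; exact: xB.
  - apply: le_trans (_ : phi i j (row i (x s), row j (x s)) <= _).
      by rewrite ler_piMl.
    apply: le_trans (ler_norm _) _; apply: le_trans (phiB _) _.
    by rewrite lerD2l ler_wpM2l // prod_normE /= ge_max !row_le.
have [A [A0 wA]] := fin_family_ub pair_ub.
by exists A => // i j s sT; exact: (wA (i, j)).
Qed.

Lemma dotv_row_primitive (v : 'rV[R]_d) i :
  is_primitive (fun t => dotv v (row i (x t)))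
    (fun s => \sum_j weight i j s * (dotv v (row j (x s)) - dotv v (row i (x s)))).
Proof.
apply: eq_is_primitive (is_primitive_sum (index_enum 'I_d)
  (fun k => is_primitiveZ (v 0 k) (coord_primitive i k))) => [t|s].
  by rewrite /dotv; apply: eq_bigr => k _; rewrite mxE.
rewrite /dotv; under eq_bigr do rewrite mulr_sumr.
rewrite exchange_big /=; apply: eq_bigr => j _.
by rewrite -sumrB mulr_sumr; apply: eq_bigr => k _; rewrite !mxE; ring.
Qed.

Lemma solution_dominated t s : 0 <= t -> t <= s -> lin_dominated (x s) (x t).
Proof.
move=> t0 ts w i; pose f j u := dotv w (row j (x u)).
exists [arg max_(j > i) f j t]%O.
apply: (maximum_principle (f := f) (dotv_row_primitive w) _ weight_ge0 weight_bounded t0 _ ts).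
  by move=> *; exact: lexx.
by case: arg_maxP => // j0 _ jmax j; exact: jmax.
Qed.
End Agents.

Theorem proposition1 (R : realType) (N d : nat) (hN : (2 <= N)%N) (hd : (1 <= d)%N)
  (lam : 'I_N -> 'M[R]_(N, d) -> R)
  (phi : 'I_N -> 'I_N -> 'rV[R]_d * 'rV[R]_d -> R)
  (M : 'I_N -> 'I_N -> R -> R) (x : R -> 'M[R]_(N, d))
  (hM_meas : forall i j, measurable_fun (`[0%R, +oo[%classic : set (Leb R)) (M i j : Leb R -> R))
  (hM_range : forall i j t, 0 <= t -> 0 <= M i j t <= 1)
  (hlam_lip : forall i, lipschitz (lam i))
  (hlam_pos : forall i X, 0 < lam i X)
  (hphi_lip : forall i j, lipschitz (phi i j))
  (hphi_pos : forall i j y z, 0 < phi i j (y, z))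
  (hx : caratheodory_solution lam phi M x) :
  (forall t s : R, 0 <= t -> t <= s -> supp (x s) `<=` supp (x t)) /\
  (d = 1%N -> forall k : 'I_d, forall t s : R, 0 <= t -> t <= s ->
      fmax (fun j => x s j k) <= fmax (fun j => x t j k) /\
      fmin (fun j => x t j k) <= fmin (fun j => x s j k)) /\
  (forall t s : R, 0 <= t -> t <= s -> diam (x s) <= diam (x t)).
Proof.
have N0 : (0 < N)%N by apply: leq_trans hN.
have dom (t s : R) : 0 <= t -> t <= s -> lin_dominated (x s) (x t).
  exact: (solution_dominated hM_range hlam_lip hlam_pos hphi_lip hphi_pos hx).
split; [|split] => [t s t0 ts|_ k t s t0 ts|t s t0 ts].
- exact: supp_sub_dominated (dom t s t0 ts).
- exact: fmax_fmin_dominated N0 (dom t s t0 ts).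
- exact: diam_le_dominated (dom t s t0 ts).
Qed.
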